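(* Let $e^m_1,e^m_2,e^m_3$ and $e^g_1,e^g_2,e^g_3$ be Bernoulli random variables on a common probability space. For $i\in\{1,2,3\}$, $e^m_i$ indicates that sub-system $i$ makes a safety-critical miss and $e^g_i$ indicates that it makes a safety-critical ghost. Let $e^m$ be the event that at least two of $e^m_1,e^m_2,e^m_3$ occur, and let $e^g$ be the event that at least two of $e^g_1,e^g_2,e^g_3$ occur. These are the miss and ghost events of the majority-vote fusion system. Let $c>0$ and $p\ge 0$. Assume: - for every pair $i\neq j$, the variables $e^m_i,e^m_j$ are one-sided $c$-approximate independent, and so are $e^g_i,e^g_j$; - for every $i$, $\Pr[e^m_i]\le p$ and $\Pr[e^g_i]\le p$. Then \[ \Pr[e^m \lor e^g] \le 6\,c\,p^2 . \]
   Context: Two Bernoulli random variables $r_1,r_2$ are called one-sided $c$-approximate independent if $\Pr[r_1 \land r_2] \le c\,\Pr[r_1]\,\Pr[r_2]$. *)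

From HB Require Import structures.
From mathcomp Require Import all_boot all_order all_algebra.
From mathcomp Require Import all_classical all_reals all_analysis.
Set Implicit Arguments. Unset Strict Implicit. Unset Printing Implicit Defensive.
Import Order.TTheory GRing.Theory Num.Theory.
Local Open Scope classical_set_scope.
Local Open Scope ring_scope.

(* A Bernoulli random variable on (T, P) is identified with the measurable
   event on which it takes value 1. *)

Definition one_sided_approx_indep d (T : measurableType d) (R : realType)
  (P : probability T R) (c : R) (A B : set T) : Prop :=
  (P (A `&` B) <= c%:E * P A * P B)%E.

Definition at_least_two_of_three (T : Type) (A : 'I_3 -> set T) : set T :=
  [set x | (2 <= #|[set i : 'I_3 | `[< A i x >]]|)%N].

(* At least two of the events A_i occur exactly when all events indexed by
   some two-element set S occur, so a union bound over the C(n,2) pairs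
   {i, j}, each of probability at most c p^2 by one-sided approximate
   independence, bounds the failure of a majority vote by C(n,2) c p^2.  For
   three sub-systems this is 3 c p^2 for misses and for ghosts, and a last
   union bound gives 6 c p^2. *)

From HB Require Import structures.
From mathcomp Require Import all_boot all_order all_algebra.
From mathcomp Require Import all_classical all_reals all_analysis.
From mathcomp Require Import ring.
Import Order.TTheory GRing.Theory Num.Theory.
Local Open Scope classical_set_scope.
Local Open Scope ring_scope.

(* [at_least_two_of_three] is the instance [I := 'I_3]. *)
Definition at_least_two {T : Type} {I : finType} (A : I -> set T) : set T :=
  [set x | (1 < #|[set i | `[< A i x >]]|)%N].

Lemma at_least_two_bigcup (T : Type) (I : finType) (A : I -> set T) :
  at_least_two A =
  \bigcup_(S in [set S : {set I} | #|S| == 2%N]) \bigcap_(i in [set` S]) A i.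
Proof.
apply/seteqP; split => x /=.
- case/card_gt1P => i [j [+ + ij]]; rewrite !inE => /asboolP Aix /asboolP Ajx.
  exists [set i; j]%SET; first by rewrite /= cards2 ij.
  by move=> k /=; rewrite !inE => /orP[] /eqP ->.
- case=> S /= /eqP S2 SA.
  have /subset_leq_card : S \subset [set i | `[< A i x >]].
    by apply/fintype.subsetP => i Si; rewrite inE; apply/asboolP; exact: SA.
  by rewrite S2.
Qed.

Lemma bigcap_set2 (T : Type) (I : finType) (A : I -> set T) (i j : I) :
  \bigcap_(k in [set` [set i; j]%SET]) A k = A i `&` A j.
Proof.
apply/seteqP; split => x /=.
- by move=> Ax; split; apply: Ax; rewrite /= !inE eqxx ?orbT.
- by move=> [Aix Ajx] k /=; rewrite !inE => /orP[] /eqP ->.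
Qed.

Section at_least_two_measure.
Context {d : measure_display} {T : measurableType d} {R : realType}.
Context (P : probability T R) {I : finType} {A : I -> set T}.
Hypothesis mA : forall i, measurable (A i).

Lemma measurable_at_least_two : measurable (at_least_two A).
Proof.
rewrite at_least_two_bigcup; apply: fin_bigcup_measurable => // S _.
exact: fin_bigcap_measurable.
Qed.

Lemma le_measure_at_least_two :
  (P (at_least_two A) <=
   \sum_(S : {set I} | #|S| == 2%N) P (\bigcap_(i in [set` S]) A i))%E.
Proof.
rewrite bigfs; [|exact: index_enum_uniq|by move=> S _; rewrite mem_index_enum].
apply: content_sub_fsum => //.
- by move=> S _; exact: fin_bigcap_measurable.
- exact: measurable_at_least_two.
- by rewrite at_least_two_bigcup.
Qed.

Lemma measure_at_least_two_le (q : R) :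
  (forall i j, i != j -> (P (A i `&` A j) <= q%:E)%E) ->
  (P (at_least_two A) <= ('C(#|I|, 2)%:R * q)%:E)%E.
Proof.
move=> Aq; apply: le_trans le_measure_at_least_two _.
apply: le_trans (_ : \sum_(S : {set I} | #|S| == 2%N) q%:E <= _)%E.
  by apply: lee_sum => S /cards2P [i [j [ij ->]]]; rewrite bigcap_set2; exact: Aq.
rewrite sumEFin lee_fin -card_draws mulr_natl -sumr_const.
by under [leRHS]eq_bigl do rewrite inE.
Qed.

Lemma measure_at_least_two_approx_indep (c p : R) : 0 <= c ->
  (forall i j, i != j -> one_sided_approx_indep P c (A i) (A j)) ->
  (forall i, (P (A i) <= p%:E)%E) ->
  (P (at_least_two A) <= ('C(#|I|, 2)%:R * c * p ^+ 2)%:E)%E.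
Proof.
move=> c0 Aindep Ap; rewrite -mulrA; apply: measure_at_least_two_le => i j ij.
apply: le_trans (Aindep i j ij) _.
rewrite expr2 mulrA !EFinM lee_pmul ?mule_ge0 ?lee_pmul //.
Qed.

End at_least_two_measure.

Theorem corollary3 (d : measure_display) (T : measurableType d) (R : realType)
  (P : probability T R) (em eg : 'I_3 -> set T) (c p : R) :
  (forall i, measurable (em i)) -> (forall i, measurable (eg i)) ->
  0 < c -> 0 <= p ->
  (forall i j : 'I_3, i != j -> one_sided_approx_indep P c (em i) (em j)) ->
  (forall i j : 'I_3, i != j -> one_sided_approx_indep P c (eg i) (eg j)) ->
  (forall i, (P (em i) <= p%:E)%E) -> (forall i, (P (eg i) <= p%:E)%E) ->
  (P (at_least_two_of_three em `|` at_least_two_of_three eg)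
     <= (6 * c * p ^+ 2)%:E)%E.
Proof.
move=> mem meg /ltW c0 _ em_indep eg_indep em_p eg_p.
apply: le_trans (measureU2 _ (measurable_at_least_two mem)
                              (measurable_at_least_two meg)) _.
have -> : 6 * c * p ^+ 2 =
    'C(#|'I_3|, 2)%:R * c * p ^+ 2 + 'C(#|'I_3|, 2)%:R * c * p ^+ 2.
  by rewrite card_ord (_ : 'C(3, 2) = 3%N) //; ring.
by rewrite EFinD leeD // measure_at_least_two_approx_indep.
Qed.
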